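(* Let $H$ be a hypergroup with hyperoperation $*$ and let $\equiv$ be a congruence relation on $H$. Let $H/\equiv=\{[a]:a\in H\}$ be the set of equivalence classes, with hyperoperation $[x]\boxdot[y]=\{[z]: z\in x'*y' \text{ for some } x',y'\in H \text{ with } [x']=[x],[y']=[y]\}$. Then $(H/\equiv,\boxdot)$ is a hypergroup.
   Context: A hypergroup is a nonempty set $H$ with $*:H\times H\to P^*(H)$ (nonempty subsets), extended to subsets by unions, which is associative, has a unique identity $e$ ($e*x=x*e=\{x\}$), unique inverses $h^{-1}$ with $e\in(h^{-1}*h)\cap(h*h^{-1})$, and is reversible ($c\in a*b\Rightarrow a\in c*b^{-1},\ b\in a^{-1}*c$). For an equivalence relation $\equiv$ on $H$ and subsets $A,B\subseteq H$, write $A\equiv B$ if for every $a\in A$ and $b\in B$ there exist $b'\in A$ and $a'\in B$ with $a\equiv a'$ and $b\equiv b'$. A congruence relation on $H$ is an equivalence relation $\equiv$ such that (i) if $a\equiv x$ and $b\equiv y$ then $a*b\equiv x*y$ and $b*a\equiv y*x$; (ii) if $a\equiv b$ then $a^{-1}\equiv b^{-1}$. *)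

(* A hyperoperation on a type T is a ternary relation
   [op x y z] meaning  z ∈ x * y. *)
From Stdlib Require Import RelationClasses.

Set Implicit Arguments.

Section Hyper.
Variable T : Type.
Variable op : T -> T -> T -> Prop.

Definition setop (A B : T -> Prop) : T -> Prop :=
  fun z => exists a b, A a /\ B b /\ op a b z.

Definition single (x : T) : T -> Prop := fun y => y = x.

Definition is_identity (e : T) : Prop :=
  forall x z, (op e x z <-> z = x) /\ (op x e z <-> z = x).

Definition is_inverse (e h h' : T) : Prop := op h' h e /\ op h h' e.

Definition is_hypergroup : Prop :=
  inhabited T /\
  (* values are nonempty subsets *)
  (forall x y, exists z, op x y z) /\
  (forall a b c z,
      setop (setop (single a) (single b)) (single c) z <->
      setop (single a) (setop (single b) (single c)) z) /\
  exists e, is_identity e /\ (forall e', is_identity e' -> e' = e) /\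
    (forall h, exists h', is_inverse e h h' /\
                 forall h'', is_inverse e h h'' -> h'' = h') /\
    (forall a b c a' b', op a b c -> is_inverse e a a' -> is_inverse e b b' ->
        op c b' a /\ op a' c b).

Definition set_equiv (R : T -> T -> Prop) (A B : T -> Prop) : Prop :=
  forall a b, A a -> B b ->
    exists b' a', A b' /\ B a' /\ R a a' /\ R b b'.

Definition is_congruence (R : T -> T -> Prop) : Prop :=
  Equivalence R /\
  (forall a b x y, R a x -> R b y ->
     set_equiv R (op a b) (op x y) /\ set_equiv R (op b a) (op y x)) /\
  (forall e a b a' b', is_identity e -> R a b ->
     is_inverse e a a' -> is_inverse e b b' -> R a' b').

End Hyper.

Definition quot (T : Type) (R : T -> T -> Prop) : Type :=
  { C : T -> Prop | exists a, C = R a }.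

Definition quot_op (T : Type) (op : T -> T -> T -> Prop) (R : T -> T -> Prop)
  (X Y Z : quot R) : Prop :=
  exists x' y' z, proj1_sig X x' /\ proj1_sig Y y' /\ op x' y' z /\
                  proj1_sig Z = R z.

(* Since ≡ is compatible with the hyperoperation and products are nonempty,
   the product of classes does not depend on the chosen representatives:
   [a] ⊡ [b] = {[c] : c ∈ a * b}.  Each hypergroup axiom of the quotient is
   then the corresponding axiom of H read on representatives.  Uniqueness of
   inverses in the quotient comes from reversibility: if [e] ∈ [k] ⊡ [h], pick
   w ∈ k * h with w ≡ e; then k ∈ w * h⁻¹, so k is congruent to an element of
   e * h⁻¹ = {h⁻¹}. *)
From Stdlib Require Import RelationClasses ProofIrrelevance
  FunctionalExtensionality PropExtensionality.

Set Implicit Arguments.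

Section SetopSingle.
Variables (T : Type) (op : T -> T -> T -> Prop).

Lemma setop_single_l a b c z :
  setop op (setop op (single a) (single b)) (single c) z <->
  exists p, op a b p /\ op p c z.
Proof.
  unfold setop, single; split.
  - intros (p & c' & (a' & b' & -> & -> & Hp) & -> & Hz); eauto.
  - intros (p & Hp & Hz); exists p, c; split; [exists a, b|]; auto.
Qed.

Lemma setop_single_r a b c z :
  setop op (single a) (setop op (single b) (single c)) z <->
  exists q, op b c q /\ op a q z.
Proof.
  unfold setop, single; split.
  - intros (a' & q & -> & (b' & c' & -> & -> & Hq) & Hz); eauto.
  - intros (q & Hq & Hz); exists a, q; split; [|split; [exists b, c|]]; auto.
Qed.

End SetopSingle.

Section Quotient.
Variables (T : Type) (op : T -> T -> T -> Prop) (R : T -> T -> Prop).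
Hypothesis R_equiv : Equivalence R.
Hypothesis op_total : forall x y, exists z, op x y z.
Hypothesis op_compat :
  forall a b x y, R a x -> R b y -> set_equiv R (op a b) (op x y).

Local Notation qop := (@quot_op T op R).

Definition cls (a : T) : quot R := exist _ (R a) (ex_intro _ a eq_refl).

Lemma quot_eq (X : quot R) a : proj1_sig X = R a -> X = cls a.
Proof.
  intros HX; apply eq_sig_hprop; [intros; apply proof_irrelevance | exact HX].
Qed.

Lemma quot_cls (X : quot R) : exists a, X = cls a.
Proof. destruct X as [C [a ->]]; exists a; reflexivity. Qed.

Lemma cls_eq a b : R a b -> cls a = cls b.
Proof.
  intros Hab; apply quot_eq; simpl.
  apply functional_extensionality; intros x; apply propositional_extensionality.
  split; intros Hx; [transitivity a; [symmetry|] | transitivity b]; assumption.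
Qed.

Lemma eq_cls a b : cls a = cls b -> R a b.
Proof.
  intros Hab; apply (f_equal (@proj1_sig _ _)) in Hab; simpl in Hab.
  rewrite Hab; reflexivity.
Qed.

Lemma op_lift a b x y w :
  R a x -> R b y -> op x y w -> exists w', op a b w' /\ R w w'.
Proof.
  intros Hax Hby Hw; destruct (op_total a b) as [u Hu].
  destruct (op_compat Hax Hby Hu Hw) as (w' & _ & Hw' & _ & _ & Hww').
  eauto.
Qed.

Lemma quot_op_cls a b (Z : quot R) :
  qop (cls a) (cls b) Z <-> exists c, op a b c /\ Z = cls c.
Proof.
  split.
  - intros (x & y & z & Hax & Hby & Hz & HZ); simpl in Hax, Hby.
    destruct (op_lift Hax Hby Hz) as (c & Hc & Hzc).
    exists c; split; [exact Hc|].
    rewrite (quot_eq _ HZ); apply cls_eq, Hzc.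
  - intros (c & Hc & ->); exists a, b, c; simpl.
    repeat split; try reflexivity; exact Hc.
Qed.

Lemma quot_op_total (X Y : quot R) : exists Z, qop X Y Z.
Proof.
  destruct (quot_cls X) as [x ->], (quot_cls Y) as [y ->].
  destruct (op_total x y) as [z Hz].
  exists (cls z); apply quot_op_cls; eauto.
Qed.

Lemma quot_setop_single_l a b c (W : quot R) :
  setop qop (setop qop (single (cls a)) (single (cls b)))
    (single (cls c)) W <->
  exists w, setop op (setop op (single a) (single b)) (single c) w /\ W = cls w.
Proof.
  rewrite setop_single_l; split.
  - intros (P & HP & HW).
    apply quot_op_cls in HP as (u & Hu & ->).
    apply quot_op_cls in HW as (w & Hw & ->).
    exists w; split; [apply setop_single_l; eauto | reflexivity].
  - intros (w & Hw & ->); apply setop_single_l in Hw as (u & Hu & Hw).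
    exists (cls u); split; apply quot_op_cls; eauto.
Qed.

Lemma quot_setop_single_r a b c (W : quot R) :
  setop qop (single (cls a))
    (setop qop (single (cls b)) (single (cls c))) W <->
  exists w, setop op (single a) (setop op (single b) (single c)) w /\ W = cls w.
Proof.
  rewrite setop_single_r; split.
  - intros (Q & HQ & HW).
    apply quot_op_cls in HQ as (u & Hu & ->).
    apply quot_op_cls in HW as (w & Hw & ->).
    exists w; split; [apply setop_single_r; eauto | reflexivity].
  - intros (w & Hw & ->); apply setop_single_r in Hw as (u & Hu & Hw).
    exists (cls u); split; apply quot_op_cls; eauto.
Qed.

Hypothesis op_assoc : forall a b c z,
  setop op (setop op (single a) (single b)) (single c) z <->
  setop op (single a) (setop op (single b) (single c)) z.

Lemma quot_op_assoc (A B C W : quot R) :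
  setop qop (setop qop (single A) (single B)) (single C) W <->
  setop qop (single A) (setop qop (single B) (single C)) W.
Proof.
  destruct (quot_cls A) as [a ->], (quot_cls B) as [b ->], (quot_cls C) as [c ->].
  rewrite quot_setop_single_l, quot_setop_single_r.
  split; intros (w & Hw & ->); exists w; split; try reflexivity; apply op_assoc, Hw.
Qed.

Variable e : T.
Hypothesis e_identity : is_identity op e.
Hypothesis inverse_exists : forall h, exists h', is_inverse op e h h'.
Hypothesis op_reversible : forall a b c a' b',
  op a b c -> is_inverse op e a a' -> is_inverse op e b b' ->
  op c b' a /\ op a' c b.

Lemma quot_identity : is_identity qop (cls e).
Proof.
  intros X Z; destruct (quot_cls X) as [x ->]; rewrite !quot_op_cls.
  split; split.
  - intros (w & Hw & ->); apply (proj1 (e_identity x w)) in Hw; subst; reflexivity.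
  - intros ->; exists x; split; [apply (proj1 (e_identity x x))|]; reflexivity.
  - intros (w & Hw & ->); apply (proj2 (e_identity x w)) in Hw; subst; reflexivity.
  - intros ->; exists x; split; [apply (proj2 (e_identity x x))|]; reflexivity.
Qed.

Lemma quot_identity_unique (E : quot R) : is_identity qop E -> E = cls e.
Proof.
  intros HE; apply (proj1 (proj1 (HE (cls e) E))).
  apply (proj2 (proj2 (quot_identity E E))); reflexivity.
Qed.

Lemma quot_inverse_cls h h' :
  is_inverse op e h h' -> is_inverse qop (cls e) (cls h) (cls h').
Proof. intros [Hl Hr]; split; apply quot_op_cls; eauto. Qed.

Lemma quot_left_inverse_unique h h' (X : quot R) :
  is_inverse op e h h' -> qop X (cls h) (cls e) -> X = cls h'.
Proof.
  intros Hh' HX; destruct (quot_cls X) as [k ->].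
  apply quot_op_cls in HX as (w & Hw & Hew); apply eq_cls in Hew.
  destruct (inverse_exists k) as [k' Hk'].
  destruct (op_reversible Hw Hk' Hh') as [Hwk _].
  destruct (op_lift Hew (reflexivity h') Hwk) as (k2 & Hk2 & Hkk2).
  apply (proj1 (e_identity h' k2)) in Hk2; subst k2.
  apply cls_eq, Hkk2.
Qed.

Lemma quot_op_reversible (A B C A' B' : quot R) :
  qop A B C ->
  is_inverse qop (cls e) A A' -> is_inverse qop (cls e) B B' ->
  qop C B' A /\ qop A' C B.
Proof.
  intros HC [HA _] [HB _].
  destruct (quot_cls A) as [a ->], (quot_cls B) as [b ->].
  apply quot_op_cls in HC as (c & Hc & ->).
  destruct (inverse_exists a) as [a' Ha'], (inverse_exists b) as [b' Hb'].
  rewrite (quot_left_inverse_unique Ha' HA), (quot_left_inverse_unique Hb' HB).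
  destruct (op_reversible Hc Ha' Hb') as [Hcb Hac].
  split; apply quot_op_cls; eauto.
Qed.

Theorem quot_is_hypergroup : is_hypergroup qop.
Proof.
  split; [exact (inhabits (cls e))|].
  split; [exact quot_op_total|].
  split; [exact quot_op_assoc|].
  exists (cls e); split; [exact quot_identity|].
  split; [exact quot_identity_unique|].
  split; [|exact quot_op_reversible].
  intros X; destruct (quot_cls X) as [h ->], (inverse_exists h) as [h' Hh'].
  exists (cls h'); split; [exact (quot_inverse_cls Hh')|].
  intros X [HX _]; exact (quot_left_inverse_unique Hh' HX).
Qed.

End Quotient.

Theorem proposition4p13 (T : Type) (op : T -> T -> T -> Prop)
  (R : T -> T -> Prop) :
  is_hypergroup op -> is_congruence op R ->
  is_hypergroup (@quot_op T op R).
Proof.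
  intros (_ & op_total & op_assoc & e & e_identity & _ & inverses & op_rev)
         (R_equiv & R_compat & _).
  apply (quot_is_hypergroup R_equiv op_total) with (e := e); auto.
  - intros a b x y Hax Hby; apply (R_compat a b x y Hax Hby).
  - intros h; destruct (inverses h) as (h' & Hh' & _); eauto.
Qed.
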